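(* There exists $n_0$ such that the following holds for all $n>n_0$. Let $r\ge25$ and let $A\subseteq S_n$ be a conjugacy class with $\mu(A)\ge e^{-n}$ such that every permutation in $A$ has at most $(r/2)^{\ell}$ cycles of length $\ell$, for every $\ell\ge1$. Then $A$ is $r$-global, i.e. for every $d\ge1$ and every $d$-umvirate $U_{I\to J}$ we have $\mu_{U_{I\to J}}(A)\le r^{d}\mu(A)$.
   Context: $\mu(A)=|A|/n!$. For distinct $i_1,\dots,i_d$ and distinct $j_1,\dots,j_d$ in $[n]$, with $I=(i_1,\dots,i_d)$, $J=(j_1,\dots,j_d)$, the $d$-umvirate $U_{I\to J}$ is the set of $\pi\in S_n$ with $\pi(i_k)=j_k$ for all $k$, and $\mu_{U}(A)=|A\cap U|/|U|$. *)

From HB Require Import structures.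
From mathcomp Require Import all_boot all_order all_algebra all_fingroup.
From mathcomp Require Import reals sequences exp.
Set Implicit Arguments. Unset Strict Implicit. Unset Printing Implicit Defensive.
Import Order.TTheory GRing.Theory Num.Theory.
Local Open Scope ring_scope.

Definition mu (R : realType) (n : nat) (A : {set 'S_n}) : R :=
  #|A|%:R / (n`!)%:R.

Definition umvirate (n d : nat) (I J : 'I_d -> 'I_n) : {set 'S_n} :=
  [set s : 'S_n | [forall k : 'I_d, s (I k) == J k]].

Definition mu_cond (R : realType) (n : nat) (U A : {set 'S_n}) : R :=
  #|A :&: U|%:R / #|U|%:R.

(* number of cycles of length l of s (fixed points are cycles of length 1) *)
Definition ncycles (n : nat) (s : 'S_n) (l : nat) : nat :=
  #|[set X in porbits s | #|X| == l]|.

Definition r_global (R : realType) (n : nat) (r : R) (A : {set 'S_n}) : Prop :=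
  forall (d : nat) (I J : 'I_d -> 'I_n), (1 <= d)%N ->
    injective I -> injective J ->
    mu_cond R (umvirate I J) A <= r ^+ d * mu R A.

From HB Require Import structures.
From mathcomp Require Import all_boot all_order all_algebra all_fingroup.
From mathcomp Require Import reals sequences exp.
From mathcomp Require Import ring lra zify.
Import Order.TTheory GRing.Theory Num.Theory.
Set Implicit Arguments. Unset Strict Implicit. Unset Printing Implicit Defensive.

(* Write A as the class of pi and U = U_{I->J}.  Then mu_U(A)/mu(A) = N/(n-d)!,
   where N counts the t with pi^t in U, i.e. the injections g satisfying
   g (J k) = pi (g (I k)); we show N <= r^d (n-d)!.  The constraints form a
   graph of paths and cycles, eliminated vertex by vertex: an isolated vertex
   is a free choice among the unused values, the start of a path is determined
   by its successor, two consecutive edges of a cycle merge into one edge of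
   added weight, and a loop of weight w forces a fixed point of pi^w, of which
   there are at most sum_{l<=w} l c_l(pi) <= r^w.  When 5d < 2n each path edge
   costs a factor at most 5 <= r; when 5d >= 2n the bound is trivial, as
   r^d mu(A) >= 25^d e^{-n} >= 1. *)

Lemma card_le_mul_fibers (T T' : finType) (f : T -> T') (S : {set T}) (S' : {set T'}) K :
  {in S, forall t, f t \in S'} ->
  (forall t', t' \in S' -> (#|[set t in S | f t == t']| <= K)%N) ->
  (#|S| <= K * #|S'|)%N.
Proof.
move=> fS fiberK; rewrite -sum1_card (partition_big f (mem S')) //=.
rewrite mulnC -sum_nat_const; apply: leq_sum => t' t'S.
by rewrite sum1dep_card; apply: fiberK.
Qed.

Section EdgeSystems.
Variables (n : nat) (pi : 'S_n).

Local Notation fT := {ffun 'I_n -> 'I_n}.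

(* An edge [out a = Some (b, w)] is the constraint [g b = pi^w (g a)] on an
   injection [g] of the vertex set [D]; solutions are extended by the identity
   outside [D], so that they can be counted as finite functions. *)
Definition edges := 'I_n -> option ('I_n * nat).

Definition weight (o : option ('I_n * nat)) : nat := if o is Some (_, w) then w else 0.
Definition total_weight (out : edges) : nat := \sum_a weight (out a).
Definition tails (out : edges) : {set 'I_n} := [set a | out a != None].
Definition head (out : edges) (a : 'I_n) : 'I_n := if out a is Some (b, _) then b else a.
Definition heads (out : edges) : {set 'I_n} := head out @: tails out.

Record wf_edges (D : {set 'I_n}) (out : edges) : Prop := WfEdges {
  edge_in : forall a b w, out a = Some (b, w) -> [/\ a \in D, b \in D & (0 < w)%N];
  edge_head_inj : forall a a' b w w', out a = Some (b, w) -> out a' = Some (b, w') -> a = a'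
}.

Definition solutions (D : {set 'I_n}) (out : edges) : {set fT} :=
  [set g : fT | [forall x, (x \notin D) ==> (g x == x)] &&
    [forall x, forall y, (x \in D) ==> (y \in D) ==> (g x == g y) ==> (x == y)] &&
    [forall a, if out a is Some (b, w) then g b == (pi ^+ w)%g (g a) else true]].

Lemma solutionsP (D : {set 'I_n}) (out : edges) (g : fT) : reflect
  [/\ (forall x, x \notin D -> g x = x), {in D &, injective g} &
      (forall a b w, out a = Some (b, w) -> g b = (pi ^+ w)%g (g a))]
  (g \in solutions D out).
Proof.
rewrite inE; apply: (iffP idP).
  case/andP => [/andP [/forallP g_id /forallP g_inj] /forallP g_sol]; split.
  - by move=> x xD; apply/eqP; move: (g_id x); rewrite xD.
  - move=> x y xD yD gxy; move: (g_inj x) => /forallP /(_ y).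
    by rewrite xD yD gxy eqxx /= => /eqP.
  - by move=> a b w e; move: (g_sol a); rewrite e => /eqP.
case=> g_id g_inj g_sol; apply/andP; split; first (apply/andP; split).
- by apply/forallP => x; apply/implyP => xD; rewrite g_id.
- apply/forallP => x; apply/forallP => y; apply/implyP => xD; apply/implyP => yD.
  by apply/implyP => /eqP e; rewrite (g_inj x y xD yD e).
- apply/forallP => a; case e: (out a) => [[b w]|] //.
  by rewrite (g_sol a b w e).
Qed.

Definition reset (x : 'I_n) (g : fT) : fT := [ffun y => if y == x then x else g y].

Lemma reset_solution D out out' x g : g \in solutions D out ->
  (forall a b w, out' a = Some (b, w) -> [/\ a != x, b != x & g b = (pi ^+ w)%g (g a)]) ->
  reset x g \in solutions (D :\ x) out'.
Proof.
case/solutionsP => g_id g_inj _ out'_sol; apply/solutionsP; split.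
- move=> y; rewrite !inE negb_and negbK ffunE.
  by case: (eqVneq y x) => [->|_ /g_id].
- move=> y1 y2; rewrite !inE !ffunE => /andP [/negbTE -> y1D] /andP [/negbTE -> y2D].
  exact: g_inj.
- by move=> a b w /out'_sol [ax bx e]; rewrite !ffunE (negbTE ax) (negbTE bx).
Qed.

Lemma card_solutions_reset D out out' x (Y : fT -> {set 'I_n}) K :
  (forall g, g \in solutions D out -> reset x g \in solutions (D :\ x) out') ->
  (forall g, g \in solutions D out -> g x \in Y (reset x g)) ->
  (forall g', g' \in solutions (D :\ x) out' -> (#|Y g'| <= K)%N) ->
  (#|solutions D out| <= K * #|solutions (D :\ x) out'|)%N.
Proof.
move=> reset_sol gxY YK; apply: (card_le_mul_fibers (f := reset x)) => // g' g'S.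
apply: (leq_trans _ (YK g' g'S)); rewrite -(@card_in_imset _ _ (fun g : fT => g x)).
  apply: subset_leq_card; apply/subsetP => z /imsetP [g].
  by rewrite inE => /andP [gS /eqP <-] ->; apply: gxY.
move=> g1 g2; rewrite !inE => /andP [_ /eqP e1] /andP [_ /eqP e2] e.
apply/ffunP => y; case: (eqVneq y x) => [-> //|yx].
by have := congr1 (fun h : fT => h y) (etrans e1 (esym e2)); rewrite !ffunE (negbTE yx).
Qed.

Lemma card_tails_le_weight D out : wf_edges D out -> (#|tails out| <= total_weight out)%N.
Proof.
case=> out_in _; rewrite -sum1_card /total_weight [in X in (_ <= X)%N](bigID (mem (tails out))) /=.
apply: leq_trans (leq_addr _ _); apply: leq_sum => a; rewrite inE.
by case e: (out a) => [[b w]|] // _ /=; case: (out_in _ _ _ e).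
Qed.

Lemma tails_sub D out : wf_edges D out -> tails out \subset D.
Proof.
case=> out_in _; apply/subsetP => a; rewrite inE.
by case e: (out a) => [[b w]|] // _; case: (out_in _ _ _ e).
Qed.

Lemma in_heads out a b w : out a = Some (b, w) -> b \in heads out.
Proof. by move=> e; apply/imsetP; exists a; rewrite /head ?inE e. Qed.

Definition drop_edge (out : edges) (x : 'I_n) : edges :=
  fun y => if y == x then None else out y.

Lemma total_weight_drop out x :
  total_weight out = (weight (out x) + total_weight (drop_edge out x))%N.
Proof.
rewrite /total_weight (bigD1 x) //= [in RHS](bigD1 x) //= /drop_edge eqxx add0n.
by congr (_ + _)%N; apply: eq_bigr => y /negbTE ->.
Qed.

Lemma tails_drop out x : tails (drop_edge out x) = tails out :\ x.
Proof. by apply/setP => y; rewrite !inE /drop_edge; case: (y == x). Qed.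

Definition only_self_enters (out : edges) (x : 'I_n) :=
  forall a w, out a = Some (x, w) -> a = x.

Lemma wf_edges_drop D out x : wf_edges D out -> only_self_enters out x ->
  wf_edges (D :\ x) (drop_edge out x).
Proof.
case=> out_in head_inj x_self; split=> [a b w|a a' b w w']; rewrite /drop_edge.
  case: eqP => // /eqP ax e; have [aD bD w0] := out_in _ _ _ e.
  rewrite !inE aD bD ax !andbT; split=> //; apply/eqP => bx.
  by rewrite bx in e; move: ax; rewrite (x_self _ _ e) eqxx.
by case: eqP => // _ e; case: eqP => // _ e'; apply: head_inj e e'.
Qed.

Lemma reset_solution_drop D out x g : g \in solutions D out -> only_self_enters out x ->
  reset x g \in solutions (D :\ x) (drop_edge out x).
Proof.
move=> gS x_self; apply: (reset_solution gS) => a b w; rewrite /drop_edge.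
case: eqP => // /eqP ax e; split=> //; last by case/solutionsP: gS => _ _; apply.
by apply/eqP => bx; rewrite bx in e; move: ax; rewrite (x_self _ _ e) eqxx.
Qed.

Lemma wf_edges_isolated D out x : wf_edges D out ->
  out x = None -> x \notin heads out -> wf_edges (D :\ x) out.
Proof.
case=> out_in head_inj ox xh; split=> // a b w e.
have [aD bD w0] := out_in _ _ _ e; rewrite !inE aD bD !andbT.
split=> //; apply/eqP => yx; first by rewrite yx ox in e.
by move: xh; rewrite -yx (in_heads e).
Qed.

Lemma card_solutions_isolated D out x : wf_edges (D :\ x) out -> x \in D ->
  (#|solutions D out| <= (n - #|D :\ x|) * #|solutions (D :\ x) out|)%N.
Proof.
move=> wf' xD; apply: (card_solutions_reset (Y := fun g' => ~: [set g' y | y in D :\ x])).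
- move=> g gS; apply: (reset_solution gS) => a b w e.
  have [] := edge_in wf' e; rewrite !inE => /andP [ax _] /andP [bx _] _.
  by case/solutionsP: gS => _ _ g_sol; rewrite (g_sol _ _ _ e).
- move=> g /solutionsP [_ g_inj _]; rewrite inE; apply/imsetP => [[y]].
  rewrite ffunE => /setD1P [yx yD]; rewrite (negbTE yx) => /g_inj gxy.
  by move: yx; rewrite gxy ?eqxx.
- move=> g' /solutionsP [_ g'_inj _].
  have := cardsC [set g' y | y in D :\ x]; rewrite card_in_imset // card_ord => e.
  by rewrite -[X in (_ <= X - _)%N]e addKn.
Qed.

Lemma notin_heads_only_self out x : x \notin heads out -> only_self_enters out x.
Proof. by move=> xh a w e; move: xh; rewrite (in_heads e). Qed.

Lemma loop_only_self D out x w : wf_edges D out -> out x = Some (x, w) ->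
  only_self_enters out x.
Proof. by case=> _ head_inj ex a w' ea; apply: head_inj ea ex. Qed.

Lemma card_solutions_source D out x b w : out x = Some (b, w) -> x \notin heads out ->
  (#|solutions D out| <= #|solutions (D :\ x) (drop_edge out x)|)%N.
Proof.
move=> ex xh; have bx : b != x by apply: contraNneq xh => <-; apply: in_heads ex.
rewrite -[X in (_ <= X)%N]mul1n.
apply: (card_solutions_reset (Y := fun g' => [set ((pi ^+ w)^-1)%g (g' b)])).
- by move=> g gS; apply: reset_solution_drop gS (notin_heads_only_self xh).
- move=> g /solutionsP [_ _ g_sol].
  by rewrite inE ffunE (negbTE bx) (g_sol _ _ _ ex) permK.
- by move=> g' _; rewrite cards1.
Qed.

Lemma card_solutions_loop D out x w : wf_edges D out -> out x = Some (x, w) ->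
  (#|solutions D out| <=
   #|[set y | (pi ^+ w)%g y == y]| * #|solutions (D :\ x) (drop_edge out x)|)%N.
Proof.
move=> wfo ex; apply: (card_solutions_reset (Y := fun=> [set y | (pi ^+ w)%g y == y])) => //.
- by move=> g gS; apply: reset_solution_drop gS (loop_only_self wfo ex).
- by move=> g /solutionsP [_ _ g_sol]; rewrite inE -(g_sol _ _ _ ex).
Qed.

Definition bypass (out : edges) (a x : 'I_n) : edges := fun y =>
  if y == x then None
  else if y == a then Some (head out x, (weight (out a) + weight (out x))%N)
  else out y.

Section Bypass.
Variables (D : {set 'I_n}) (out : edges) (a x b : 'I_n) (w1 w2 : nat).
Hypotheses (wfo : wf_edges D out) (ea : out a = Some (x, w1)) (ex : out x = Some (b, w2)).
Hypothesis bx : b != x.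

Lemma bypass_neq : a != x.
Proof. by apply: contraNneq bx => ax; move: ea; rewrite ax ex => -[->]. Qed.

Lemma bypassP y c w : bypass out a x y = Some (c, w) ->
  [/\ y = a, c = b & w = (w1 + w2)%N] \/
  [/\ y != a, y != x, c != x & out y = Some (c, w)].
Proof.
rewrite /bypass; case: eqP => // /eqP yx; case: eqP => [->|/eqP ya ey].
  by rewrite ea ex /head ex => -[<- <-]; left.
right; split=> //; apply: contraNneq ya => cx; rewrite cx in ey.
exact/eqP/(edge_head_inj wfo ey ea).
Qed.

Lemma wf_edges_bypass : wf_edges (D :\ x) (bypass out a x).
Proof.
have [aD _ w10] := edge_in wfo ea; have [_ bD w20] := edge_in wfo ex.
split=> [y c w /bypassP [[-> -> ->]|[_ yx cx ey]]|y y' c w w' /bypassP e /bypassP e'].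
- by rewrite !inE bypass_neq aD bx bD addn_gt0 w10.
- by have [yD cD w0] := edge_in wfo ey; rewrite !inE yx cx yD cD.
move: e'; case: e => [[-> -> _]|[_ yx _ ey]].
  case=> [[-> _ _]|[_ y'x _ ey']] //.
  by move: y'x; rewrite (edge_head_inj wfo ey' ex) eqxx.
case=> [[-> cb _]|[_ _ _ ey']]; last exact: (edge_head_inj wfo ey ey').
by rewrite cb in ey; move: yx; rewrite (edge_head_inj wfo ey ex) eqxx.
Qed.

Lemma total_weight_bypass : total_weight (bypass out a x) = total_weight out.
Proof.
have ax := bypass_neq.
rewrite /total_weight (bigD1 x) // [in RHS](bigD1 x) //= (bigD1 a) ?ax //=.
rewrite [in RHS](bigD1 a) ?ax //= /bypass eqxx (negbTE ax) eqxx ea ex /= add0n addnCA addnA.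
by congr (_ + _)%N; apply: eq_bigr => y /andP [/negbTE -> /negbTE ->].
Qed.

Lemma tails_bypass : tails (bypass out a x) = tails out :\ x.
Proof.
apply/setP => y; rewrite !inE /bypass; case: (y == x) => //=.
by case: (eqVneq y a) => [->|_]; rewrite ?ea.
Qed.

Lemma card_solutions_bypass :
  (#|solutions D out| <= #|solutions (D :\ x) (bypass out a x)|)%N.
Proof.
have ax := bypass_neq; rewrite -[X in (_ <= X)%N]mul1n.
apply: (card_solutions_reset (Y := fun g' => [set (pi ^+ w1)%g (g' a)])).
- move=> g gS; apply: (reset_solution gS) => y c w.
  case/solutionsP: gS => _ _ g_sol /bypassP [[-> -> ->]|[_ yx cx /g_sol]] //.
  by rewrite (g_sol _ _ _ ex) (g_sol _ _ _ ea) expgD permM.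
- by move=> g /solutionsP [_ _ g_sol]; rewrite inE ffunE (negbTE ax) (g_sol _ _ _ ea).
- by move=> g' _; rewrite cards1.
Qed.

End Bypass.

Lemma card_le_twice_tails (D : {set 'I_n}) out : {subset D <= tails out :|: heads out} ->
  (#|D| <= 2 * #|tails out|)%N.
Proof.
move=> Dsub; apply: (@leq_trans #|tails out :|: heads out|); first exact/subset_leq_card/subsetP.
by rewrite cardsU mul2n -addnn (leq_trans (leq_subr _ _)) // leq_add2l leq_imset_card.
Qed.

Lemma card_setD1_lt (D : {set 'I_n}) x : x \in D -> (#|D :\ x| < n)%N.
Proof. by move=> xD; have := max_card D; rewrite card_ord (cardsD1 x D) xD. Qed.

Section CountBound.
Local Open Scope ring_scope.
Variables (R : realFieldType) (r : R).
Hypothesis r_ge5 : 5 <= r.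
Hypothesis card_fix_le :
  forall w, (0 < w)%N -> #|[set y | (pi ^+ w)%g y == y]|%:R <= r ^+ w.

(* The factor [(n - #|D|)!] counts the ways to complete a solution to a
   permutation; for the umvirate constraints this reads [#solutions <= r^d (n-d)!]. *)
Definition count_bound D out : Prop :=
  (#|solutions D out| * (n - #|D|)`!)%:R <= r ^+ total_weight out * (n - #|tails out|)`!%:R.

Definition reducible D out x : Prop := exists out' : edges,
  [/\ wf_edges (D :\ x) out', (total_weight out' <= total_weight out)%N &
      count_bound (D :\ x) out' -> count_bound D out].

Lemma count_bound_full D out : tails out = D ->
  count_bound D out <-> #|solutions D out|%:R <= r ^+ total_weight out.
Proof. by move=> tD; rewrite /count_bound tD natrM ler_pM2r // ltr0n fact_gt0. Qed.

Lemma count_bound_empty out : wf_edges set0 out -> count_bound set0 out.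
Proof.
move=> wfo; have tails0 : tails out = set0 by apply/eqP; rewrite -subset0 (tails_sub wfo).
apply/count_bound_full => //; apply: (@le_trans _ _ 1).
  rewrite lern1 -(cards1 [ffun y : 'I_n => y]); apply/subset_leq_card/subsetP => g.
  by case/solutionsP => g_id _ _; rewrite in_set1; apply/eqP/ffunP => y; rewrite ffunE g_id ?inE.
by rewrite exprn_ege1 // (le_trans _ r_ge5) // ler1n.
Qed.

Lemma reducible_isolated D out x : wf_edges D out -> x \in D ->
  out x = None -> x \notin heads out -> reducible D out x.
Proof.
move=> wfo xD ox xh; have wf' := wf_edges_isolated wfo ox xh.
have le_sol := card_solutions_isolated wf' xD.
exists out; split=> //; rewrite /count_bound (cardsD1 x D) xD add1n.
set m := #|D :\ x|; have mn : (m < n)%N := card_setD1_lt xD.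
apply: le_trans; rewrite ler_nat -(subnSK mn) factS (subnSK mn) mulnCA mulnA.
exact: leq_mul.
Qed.

Lemma fact_bound_step (S S' m e w W' : nat) : (0 < w)%N -> (S <= S')%N ->
  (m < n)%N -> (e < n)%N -> (n - e <= 5 * (n - m))%N ->
  (S' * (n - m)`!)%:R <= r ^+ W' * (n - e)`!%:R ->
  (S * (n - m.+1)`!)%:R <= r ^+ (w + W') * (n - e.+1)`!%:R.
Proof.
move=> w_gt0 le_S mn en ne_le IH.
have fact_m : (n - m)`! = ((n - m) * (n - m.+1)`!)%N by rewrite -(subnSK mn) factS.
have fact_e : (n - e)`! = ((n - e) * (n - e.+1)`!)%N by rewrite -(subnSK en) factS.
have r_ge0 : 0 <= r by rewrite (le_trans _ r_ge5).
have r_pow : 5 <= r ^+ w.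
  have r_pow1 : 1 <= r ^+ w.-1 by rewrite exprn_ege1 // (le_trans _ r_ge5) // ler1n.
  rewrite -(prednK w_gt0) exprS (le_trans r_ge5) // -[X in X <= _]mulr1.
  by rewrite ler_wpM2l.
rewrite -(@ler_pM2r _ (n - m)%:R) ?ltr0n ?subn_gt0 //.
apply: (@le_trans _ _ (S' * (n - m)`!)%:R).
  by rewrite -natrM ler_nat fact_m -mulnA (mulnC (n - m)%N) leq_mul.
apply: (le_trans IH); rewrite fact_e !natrM exprD.
set F := (n - e.+1)`!%:R.
have -> : r ^+ w * r ^+ W' * F * (n - m)%:R = r ^+ W' * ((r ^+ w * (n - m)%:R) * F).
  by ring.
apply: ler_wpM2l; first exact: exprn_ge0.
apply: ler_wpM2r => //; apply: (@le_trans _ _ (5 * (n - m)%:R)).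
  by rewrite -natrM ler_nat.
by apply: ler_wpM2r.
Qed.

Lemma reducible_source D out x b w : wf_edges D out -> x \in D ->
  out x = Some (b, w) -> x \notin heads out ->
  {subset D <= tails out :|: heads out} -> (5 * total_weight out < 2 * n)%N ->
  reducible D out x.
Proof.
move=> wfo xD ex xh Dcover small; set out' := drop_edge out x.
have [_ _ w_gt0] := edge_in wfo ex.
have eW : total_weight out = (w + total_weight out')%N by rewrite (total_weight_drop out x) ex.
have xT : x \in tails out by rewrite inE ex.
exists out'; split; first exact: wf_edges_drop (notin_heads_only_self xh).
  by rewrite eW leq_addl.
have := card_le_twice_tails Dcover; have := card_tails_le_weight wfo; move: small.
rewrite /count_bound tails_drop (cardsD1 x D) (cardsD1 x (tails out)) xD xT !add1n eW.
(* [e < W < 2n/5] and [m <= 2e + 1] give [n - e <= 5 (n - m)] *)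
set m := #|D :\ x|; set e := #|tails out :\ x|.
move=> small le_eW le_me.
by apply: (fact_bound_step w_gt0 (card_solutions_source D ex xh)); lia.
Qed.

Lemma reducible_bypass D out a x b w1 w2 : wf_edges D out -> tails out = D ->
  out a = Some (x, w1) -> out x = Some (b, w2) -> b != x -> reducible D out x.
Proof.
move=> wfo tD ea ex bx; exists (bypass out a x).
have eW := total_weight_bypass ea ex bx; rewrite eW.
split=> //; first exact: wf_edges_bypass wfo ea ex bx.
rewrite !count_bound_full ?(tails_bypass ea) ?tD // eW => le_sol.
by apply: le_trans _ le_sol; rewrite ler_nat (card_solutions_bypass wfo ea ex bx).
Qed.

Lemma reducible_loop D out x w : wf_edges D out -> tails out = D ->
  out x = Some (x, w) -> reducible D out x.
Proof.
move=> wfo tD ex; have [_ _ w_gt0] := edge_in wfo ex.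
exists (drop_edge out x); split; first exact: wf_edges_drop (loop_only_self wfo ex).
  by rewrite (total_weight_drop out x) ex leq_addl.
rewrite !count_bound_full ?tails_drop ?tD // (total_weight_drop out x) ex exprD => le_sol.
apply: le_trans (ler_pM _ _ (card_fix_le w_gt0) le_sol) => //.
by rewrite -natrM ler_nat card_solutions_loop.
Qed.

Lemma exists_reducible D out : wf_edges D out -> D != set0 ->
  (5 * total_weight out < 2 * n)%N -> exists2 x, x \in D & reducible D out x.
Proof.
move=> wfo D_neq0 small.
have [x /= /andP [/andP [xD /eqP ox] xh] | no_isolated] :=
  pickP [pred x | (x \in D) && (out x == None) && (x \notin heads out)].
  by exists x => //; apply: reducible_isolated.
have Dcover : {subset D <= tails out :|: heads out}.
  move=> x xD; move: (no_isolated x); rewrite /= xD !inE.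
  by case: (out x) => [[]|] //= /negbFE.
have [x /= /andP [xD xh] | D_heads] := pickP [pred x | (x \in D) && (x \notin heads out)].
  move: (Dcover x xD); rewrite inE (negbTE xh) orbF inE.
  case ex: (out x) => [[b w]|] // _; exists x => //.
  exact: reducible_source ex xh Dcover small.
(* Every vertex is now a head; as heads are images of tails, all lie on cycles. *)
have tD : tails out = D.
  apply/eqP; rewrite eqEcard (tails_sub wfo) (leq_trans _ (leq_imset_card (head out) _)) //.
  by apply/subset_leq_card/subsetP => x xD; move: (D_heads x); rewrite /= xD => /negbFE.
have [x xD] := set0Pn _ D_neq0; have := xD; rewrite -{1}tD inE.
case ex: (out x) => [[b w]|] // _; exists x => //.
have [bx_eq | bx] := eqVneq b x; first by rewrite bx_eq in ex; apply: reducible_loop ex.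
move: (D_heads x); rewrite /= xD => /negbFE /imsetP [a aT xa].
move: aT xa; rewrite inE /head; case ea: (out a) => [[c w1]|] //= _ xc.
by rewrite -xc in ea; apply: reducible_bypass ea ex bx.
Qed.

Lemma count_boundP D out : wf_edges D out ->
  (5 * total_weight out < 2 * n)%N -> count_bound D out.
Proof.
have [k] := ubnP #|D|; elim: k D out => // k IH D out D_lt wfo small.
have [D0 | D_neq0] := eqVneq D set0; first by rewrite D0 in wfo *; apply: count_bound_empty.
have [x xD [out' [wf' le_W]]] := exists_reducible wfo D_neq0 small; apply.
apply: IH wf' (leq_ltn_trans _ small); last by rewrite leq_mul2l le_W orbT.
by move: D_lt; rewrite (cardsD1 x D) xD.
Qed.

End CountBound.

Section UmvirateEdges.
Variables (d : nat) (I J : 'I_d -> 'I_n).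
Hypotheses (injI : injective I) (injJ : injective J).

Definition umvirate_edges : edges :=
  fun a => if [pick k | I k == a] is Some k then Some (J k, 1%N) else None.

Lemma umvirate_edgesI k : umvirate_edges (I k) = Some (J k, 1%N).
Proof. by rewrite /umvirate_edges; case: pickP => [k' /eqP /injI -> //|/(_ k)]; rewrite eqxx. Qed.

Lemma umvirate_edgesP a b w : umvirate_edges a = Some (b, w) ->
  exists k, [/\ a = I k, b = J k & w = 1%N].
Proof. by rewrite /umvirate_edges; case: pickP => // k /eqP <- [<- <-]; exists k. Qed.

Lemma wf_umvirate_edges : wf_edges setT umvirate_edges.
Proof.
split=> [a b w /umvirate_edgesP [k [-> -> ->]] | a a' b w w']; first by rewrite !inE.
by move=> /umvirate_edgesP [k [-> -> _]] /umvirate_edgesP [k' [-> /injJ -> _]].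
Qed.

Lemma tails_umvirate_edges : tails umvirate_edges = I @: 'I_d.
Proof.
apply/setP => a; rewrite inE; apply/idP/imsetP => [|[k _ ->]]; last by rewrite umvirate_edgesI.
by case e: (umvirate_edges a) => [[b w]|] // _; have [k [-> _ _]] := umvirate_edgesP e; exists k.
Qed.

Lemma total_weight_umvirate_edges : total_weight umvirate_edges = d.
Proof.
rewrite /total_weight (bigID (mem (tails umvirate_edges))) /= [X in (_ + X)%N]big1; last first.
  by move=> a; rewrite inE negbK => /eqP ->.
rewrite addn0 (eq_bigr (fun _ => 1%N)).
  by rewrite sum1_card tails_umvirate_edges card_imset ?card_ord.
move=> a; rewrite inE; case e: (umvirate_edges a) => [[b w]|] // _.
by have [k [_ _ ->]] := umvirate_edgesP e.
Qed.

(* [pi ^ t] maps [I k] to [J k] iff [g := t^-1] satisfies [g (J k) = pi (g (I k))]. *)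
Lemma card_conjugators_le_solutions :
  (#|[set t : 'S_n | (pi ^ t)%g \in umvirate I J]| <= #|solutions setT umvirate_edges|)%N.
Proof.
rewrite -(@card_in_imset _ _ (fun t : 'S_n => [ffun x => (t^-1)%g x])); last first.
  move=> t1 t2 _ _ e; apply: invg_inj; apply/permP => x.
  by have := congr1 (fun h : fT => h x) e; rewrite !ffunE.
apply/subset_leq_card/subsetP => g /imsetP [t]; rewrite inE => t_umv ->.
have {}t_umv k : (pi ^ t)%g (I k) = J k by move: t_umv; rewrite inE => /forallP /(_ k) /eqP.
apply/solutionsP; split=> [x|x y _ _|a b w /umvirate_edgesP [k [-> -> ->]]].
- by rewrite inE.
- by rewrite !ffunE => /perm_inj.
- by rewrite !ffunE expg1 -t_umv conjgE !permM permK.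
Qed.

End UmvirateEdges.

End EdgeSystems.

Lemma exists_perm_extension (n d : nat) (I J : 'I_d -> 'I_n) :
  injective I -> injective J -> exists s : 'S_n, forall k, s (I k) = J k.
Proof.
move=> injI injJ; pose RI := I @: 'I_d; pose RJ := J @: 'I_d.
pose cI := enum (~: RI); pose cJ := enum (~: RJ).
have size_c : size cI = size cJ.
  rewrite -!cardE; apply/eqP; rewrite -(eqn_add2l #|RI|) cardsC card_imset //.
  by rewrite -(card_imset _ injJ) cardsC.
(* outside the range of [I], match the complements of the two ranges in order *)
pose f x := if [pick k | I k == x] is Some k then J k else nth x cJ (index x cI).
have fI k : f (I k) = J k.
  by rewrite /f; case: pickP => [k' /eqP /injI -> //|/(_ k)]; rewrite eqxx.
have f_out x : x \notin RI -> (index x cI < size cJ)%N /\ f x = nth x cJ (index x cI).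
  move=> xI; split; first by rewrite -size_c index_mem mem_enum inE.
  by rewrite /f; case: pickP => [k /eqP ekx|//]; move: xI; rewrite -ekx imset_f.
have f_outJ x : x \notin RI -> f x \notin RJ.
  by move=> /f_out [lt ->]; have := mem_nth x lt; rewrite mem_enum inE.
have f_inj : injective f.
  move=> x1 x2; case: (boolP (x1 \in RI)) => [/imsetP [k1 _ ->]|n1];
    case: (boolP (x2 \in RI)) => [/imsetP [k2 _ ->]|n2].
  - by rewrite !fI => /injJ ->.
  - by rewrite fI => e; move: (f_outJ _ n2); rewrite -e imset_f.
  - by rewrite fI => e; move: (f_outJ _ n1); rewrite e imset_f.
  - have [l1 ->] := f_out _ n1; have [l2 ->] := f_out _ n2.
    rewrite (set_nth_default x1 x2 l2) => /eqP; rewrite nth_uniq ?enum_uniq // => /eqP ei.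
    have m1 : x1 \in cI by rewrite mem_enum inE.
    have m2 : x2 \in cI by rewrite mem_enum inE.
    by rewrite -(nth_index x1 m1) ei (nth_index x1 m2).
by exists (perm f_inj) => k; rewrite permE fI.
Qed.

Lemma card_umvirate_le (n d : nat) (I J J' : 'I_d -> 'I_n) :
  injective J -> injective J' -> (#|umvirate I J| <= #|umvirate I J'|)%N.
Proof.
move=> injJ injJ'; have [rho rhoJ] := exists_perm_extension injJ injJ'.
rewrite -(card_imset _ (mulIg rho)); apply/subset_leq_card/subsetP => s /imsetP [t].
by rewrite !inE => /forallP t_umv ->; apply/forallP => k; rewrite permM (eqP (t_umv k)) rhoJ.
Qed.

Lemma card_umvirate (n d : nat) (I J : 'I_d -> 'I_n) : injective I -> injective J ->
  #|umvirate I J| = (n - d)`!.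
Proof.
move=> injI injJ.
have dn : (d <= n)%N by have := max_card (I @: 'I_d); rewrite card_imset // !card_ord.
pose restrict (s : 'S_n) : {ffun 'I_d -> 'I_n} := [ffun k => s (I k)].
pose inj := [set f : {ffun 'I_d -> 'I_n} | injectiveb f].
have card_fibers : n`! = (#|inj| * #|umvirate I J|)%N.
  rewrite -card_Sn -[in LHS]sum1_card (partition_big restrict (mem inj)) /=; last first.
    by move=> s _; rewrite inE; apply/injectiveP => k1 k2; rewrite !ffunE => /perm_inj /injI.
  rewrite -sum_nat_const; apply: eq_bigr => f; rewrite inE => /injectiveP injf.
  rewrite sum1_card (@eq_card _ _ (umvirate I f)).
    by apply/eqP; rewrite eqn_leq !card_umvirate_le.
  move=> s; change ((restrict s == f) = (s \in umvirate I f)); rewrite inE.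
  apply/eqP/forallP => [<- k|s_f]; first by rewrite ffunE.
  by apply/ffunP => k; rewrite ffunE (eqP (s_f k)).
move: card_fibers; rewrite card_inj_ffuns !card_ord -(ffact_fact dn) => /eqP.
by rewrite eqn_pmul2l ?ffact_gt0 // => /eqP.
Qed.

Lemma card_conjugators (gT : finGroupType) (x : gT) (B : {set gT}) :
  #|[set t : gT | (x ^ t)%g \in B]| =
  (#|(x ^: [set: gT])%g :&: B| * #|[set c : gT | (x ^ c)%g == x]|)%N.
Proof.
rewrite -sum1_card (partition_big (conjg x) (mem ((x ^: [set: gT])%g :&: B))) /=; last first.
  by move=> t; rewrite !inE memJ_class ?inE.
rewrite -sum_nat_const; apply: eq_bigr => _ /setIP [/imsetP [t0 _ ->] t0B].
rewrite sum1dep_card -[in RHS](card_imset _ (mulIg t0)); apply: eq_card => t; rewrite !inE.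
apply/andP/imsetP => [[_ /eqP e]|[c]]; last by rewrite inE => /eqP ec ->; rewrite conjgM ec.
by exists (t * t0^-1)%g; rewrite ?mulgKV // inE conjgM e conjgK.
Qed.

Lemma card_porbit_le (n : nat) (s : 'S_n) w y : (0 < w)%N -> (s ^+ w)%g y = y ->
  (#|porbit s y| <= w)%N.
Proof.
move=> w_gt0 fix_y; apply: (@leq_trans #|[set (s ^+ (i : 'I_w))%g y | i in 'I_w]|).
  apply/subset_leq_card/subsetP => z /porbitP [i ->].
  apply/imsetP; exists (Ordinal (ltn_pmod i w_gt0)) => //=.
  have fix_iter : ((s ^+ w) ^+ (i %/ w))%g y = y by rewrite permX iter_fix.
  by rewrite {1}(divn_eq i w) expgD permM mulnC expgM fix_iter.
by rewrite (leq_trans (leq_imset_card _ _)) // card_ord.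
Qed.

(* a fixed point of [s ^+ w] lies in a cycle of [s] of length at most [w] *)
Lemma card_fix_le_sum_ncycles (n : nat) (s : 'S_n) w : (0 < w)%N ->
  (#|[set y | (s ^+ w)%g y == y]| <= \sum_(l < w.+1) l * ncycles s l)%N.
Proof.
move=> w_gt0; pose short := [set X in porbits s | #|X| <= w].
rewrite -sum1_card (partition_big (porbit s) (mem short)) /=; last first.
  by move=> y; rewrite !inE => /eqP fix_y; rewrite imset_f // card_porbit_le.
apply: (@leq_trans (\sum_(X in short) #|X|)).
  apply: leq_sum => X _; rewrite sum1dep_card; apply/subset_leq_card/subsetP => y.
  by rewrite inE => /andP [_ /eqP <-]; apply: porbit_id.
rewrite (partition_big (fun X : {set 'I_n} => (inord #|X| : 'I_w.+1)) xpredT) //=.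
apply: leq_sum => l _; rewrite (eq_bigr (fun=> nat_of_ord l)); last first.
  by move=> X /andP [/setIdP [_ Xw] /eqP <-]; rewrite inordK.
rewrite sum_nat_const mulnC leq_mul2l; apply/orP; right.
apply/subset_leq_card/subsetP => X; rewrite unfold_in /= !inE.
by case/andP=> /andP [XP Xw] /eqP <-; rewrite XP inordK ?ltnS /=.
Qed.

Section CycleBound.
Local Open Scope ring_scope.
Variables (R : realFieldType) (r : R).
Hypothesis r_ge2 : 2 <= r.

Lemma sum_mul_half_pow_le w : \sum_(l < w.+1) l%:R * (r / 2) ^+ l <= r ^+ w.
Proof.
set q := r / 2; have q_ge0 : 0 <= q by rewrite /q divr_ge0 // (le_trans _ r_ge2).
have q_le : q <= r - 1 by rewrite /q; move: r_ge2; lra.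
have rq : r = 2 * q by rewrite /q; field.
elim: w => [|w IH]; first by rewrite big_ord_recr big_ord0 /= add0r mul0r expr0.
rewrite big_ord_recr /= [r ^+ w.+1]exprS.
have w_le : (w.+1)%:R <= 2 ^+ w :> R by rewrite -natrX ler_nat ltn_expl.
have last_le : (w.+1)%:R * (q * q ^+ w) <= (r - 1) * r ^+ w.
  have -> : (w.+1)%:R * (q * q ^+ w) = (q * (w.+1)%:R) * q ^+ w by ring.
  have -> : (r - 1) * r ^+ w = ((r - 1) * 2 ^+ w) * q ^+ w by rewrite {2}rq exprMn; ring.
  by rewrite ler_wpM2r ?exprn_ge0 // ler_pM.
have -> : r * r ^+ w = r ^+ w + (r - 1) * r ^+ w by ring.
by rewrite exprS lerD.
Qed.

Lemma card_fix_le_pow (n : nat) (s : 'S_n) :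
  (forall l, (1 <= l)%N -> (ncycles s l)%:R <= (r / 2) ^+ l) ->
  forall w, (0 < w)%N -> #|[set y | (s ^+ w)%g y == y]|%:R <= r ^+ w.
Proof.
move=> ncycles_le w w_gt0; apply: le_trans (sum_mul_half_pow_le w).
apply: (@le_trans _ _ (\sum_(l < w.+1) l * ncycles s l)%N%:R).
  by rewrite ler_nat card_fix_le_sum_ncycles.
rewrite natr_sum; apply: ler_sum => l _; rewrite natrM.
have [-> | l_gt0] := posnP l; first by rewrite !mul0r.
by rewrite ler_wpM2l ?ncycles_le.
Qed.

End CycleBound.

Local Open Scope ring_scope.

(* [expR (1/4) <= 4/3] and [(4/3)^10 <= 25], hence [expR n <= 25 ^ (2n/5)] *)
Lemma expR_le_pow (R : realType) (n d : nat) (r : R) : 25 <= r -> (2 * n <= 5 * d)%N ->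
  expR n%:R <= r ^+ d.
Proof.
move=> r_ge25 nd.
have exp_quarter : expR (1/4 : R) <= 4/3.
  have := expR_ge1Dx (- (1/4) : R); have := expRxMexpNx_1 (1/4 : R).
  have := expR_gt0 (1/4 : R); nra.
have nd' : (2 * n)%:R <= (5 * d)%:R :> R by rewrite ler_nat.
rewrite !natrM in nd'.
apply: (@le_trans _ _ (expR ((10 * d)%N%:R * (1/4)))); first by rewrite ler_expR natrM; lra.
rewrite expRM_natl exprM.
have four_thirds_ge0 : (0 : R) <= 4/3 by lra.
apply: (@le_trans _ _ (((4/3) ^+ 10) ^+ d)).
  apply: lerXn2r; rewrite ?nnegrE ?exprn_ge0 ?expR_ge0 //.
  by apply: lerXn2r; rewrite ?nnegrE ?expR_ge0.
apply: (@le_trans _ _ (25 ^+ d)); last by apply: lerXn2r; rewrite ?nnegrE //; lra.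
by apply: lerXn2r; rewrite ?nnegrE ?exprn_ge0 // !exprS expr0; lra.
Qed.

Lemma card_conjugators_umvirate_le (R : realFieldType) (n d : nat) (pi : 'S_n) (r : R)
    (I J : 'I_d -> 'I_n) : 5 <= r ->
  (forall w, (0 < w)%N -> #|[set y | (pi ^+ w)%g y == y]|%:R <= r ^+ w) ->
  injective I -> injective J -> (5 * d < 2 * n)%N ->
  #|[set t : 'S_n | (pi ^ t)%g \in umvirate I J]|%:R <= r ^+ d * (n - d)`!%:R.
Proof.
move=> r_ge5 fix_le injI injJ small.
have := count_boundP r_ge5 fix_le (wf_umvirate_edges I injJ).
rewrite /count_bound (total_weight_umvirate_edges J injI) (tails_umvirate_edges J injI).
rewrite card_imset // cardsT !card_ord subnn muln1 => /(_ small) le_sol.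
by apply: le_trans _ le_sol; rewrite ler_nat card_conjugators_le_solutions.
Qed.

Lemma mu_cond_class_le (R : realType) (n d : nat) (pi : 'S_n) (r : R)
    (I J : 'I_d -> 'I_n) : 5 <= r ->
  (forall w, (0 < w)%N -> #|[set y | (pi ^+ w)%g y == y]|%:R <= r ^+ w) ->
  injective I -> injective J -> (5 * d < 2 * n)%N ->
  mu_cond R (umvirate I J) (pi ^: [set: 'S_n])%g <= r ^+ d * mu R (pi ^: [set: 'S_n])%g.
Proof.
move=> r_ge5 fix_le injI injJ small.
set A := (pi ^: [set: 'S_n])%g; set C := #|[set c : 'S_n | (pi ^ c)%g == pi]|.
have card_A : n`! = (#|A| * C)%N.
  by rewrite -card_Sn -(setIT A) -card_conjugators; apply: eq_card => t; rewrite !inE.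
have A_gt0 : (0 < #|A|)%N by apply/card_gt0P; exists pi; rewrite class_refl.
have C_gt0 : (0 < C)%N by apply/card_gt0P; exists 1%g; rewrite inE conjg1.
have := card_conjugators_umvirate_le r_ge5 fix_le injI injJ small.
rewrite card_conjugators natrM /mu_cond /mu card_umvirate // card_A natrM => le_AU.
have -> : r ^+ d * (#|A|%:R / (#|A|%:R * C%:R)) = r ^+ d / C%:R.
  by field; rewrite !pnatr_eq0 -!lt0n A_gt0 C_gt0.
by rewrite ler_pdivrMr ?ltr0n ?fact_gt0 // mulrAC ler_pdivlMr ?ltr0n.
Qed.

Theorem lemma5p1 (R : realType) :
  exists n0 : nat, forall n : nat, (n0 < n)%N ->
  forall (r : R) (A : {set 'S_n}),
    25 <= r ->
    A \in classes [set: 'S_n] ->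
    expR (- (n%:R)) <= mu R A ->
    (forall s : 'S_n, s \in A -> forall l : nat, (1 <= l)%N ->
        (ncycles s l)%:R <= (r / 2) ^+ l) ->
    r_global r A.
Proof.
exists 0%N => n _ r A r_ge25 /imsetP [pi _ ->] mu_ge ncycles_le d I J _ injI injJ.
have r_ge2 : 2 <= r by lra.
have fix_le := card_fix_le_pow r_ge2 (ncycles_le pi (class_refl _ _)).
have [small | large] := ltnP (5 * d) (2 * n).
  by apply: mu_cond_class_le fix_le injI injJ small; lra.
apply: (@le_trans _ _ 1).
  rewrite /mu_cond card_umvirate // ler_pdivrMr ?ltr0n ?fact_gt0 // mul1r ler_nat.
  by rewrite -(card_umvirate injI injJ) subset_leq_card // subsetIr.
apply: le_trans (ler_wpM2l (exprn_ge0 _ (le_trans _ r_ge2)) mu_ge) => //.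
by rewrite expRN ler_pdivlMr ?expR_gt0 // mul1r expR_le_pow.
Qed.
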